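(* Let $n,m\ge 1$. Then for the Ramsey number $\mathcal{R}_{\mathcal{PDG}}$ with respect to the class $\mathcal{PDG}$ of all perfect divisor graphs, \[ \mathcal{R}_{\mathcal{PDG}}(n,m)=\mathcal{R}_{\mathcal{PO}}(n,m)=(n-1)(m-1)+1 . \]
   Context: Perfect divisor graph: for a commutative ring $R$ (with $1\ne0$), an integer $N\ge2$ and a set $S=\{m_1,\dots,m_N\}$ of $N$ pairwise coprime non-zero non-units of $R$ (coprime meaning $ra+sb=1$ for some $r,s$), with $m=m_1\cdots m_N$, a perfect divisor of $m$ w.r.t. $S$ is an element $d\ne m$ that is a product of distinct elements of $S$; $\mathrm{pdg}(S)$ is the simple undirected graph on the perfect divisors with distinct $a,b$ adjacent iff $a\mid b$ or $b\mid a$. $\mathcal{PDG}$ is the class of all such graphs. $\mathcal{PO}$ is the class of partial order graphs $G_A$ of posets $(A,\le)$ (vertex set $A$, distinct $a,b$ adjacent iff $a\le b$ or $b\le a$). For a class $\mathcal{C}$ of graphs, $\mathcal{R}_{\mathcal{C}}(n,m)$ is the minimal $r$ such that every induced subgraph with $r$ vertices of any graph in $\mathcal{C}$ contains either $K_n$ or an independent set of $m$ vertices. *)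

From mathcomp Require Import all_boot all_algebra.
Set Implicit Arguments. Unset Strict Implicit. Unset Printing Implicit Defensive.
Import GRing.Theory.
Local Open Scope ring_scope.

(* An induced subgraph on r vertices is given by an
   injective enumeration [f : 'I_r -> T] of r distinct vertices. *)
Definition ramsey_ok (T : Type) (V : T -> Prop) (adj : T -> T -> Prop)
    (n k r : nat) : Prop :=
  forall f : 'I_r -> T, injective f -> (forall i, V (f i)) ->
    (exists g : 'I_n -> 'I_r, injective g /\
       forall i j, i != j -> adj (f (g i)) (f (g j))) \/
    (exists g : 'I_k -> 'I_r, injective g /\
       forall i j, i != j -> ~ adj (f (g i)) (f (g j))).

Definition is_min_nat (P : nat -> Prop) (x : nat) : Prop :=
  P x /\ forall r, P r -> (x <= r)%N.

Definition dvdR (R : comNzRingType) (a b : R) : Prop := exists c : R, b = a * c.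
Definition unitR (R : comNzRingType) (a : R) : Prop := exists b : R, a * b = 1.
Definition coprimeR (R : comNzRingType) (a b : R) : Prop :=
  exists r s : R, r * a + s * b = 1.

(* Hypotheses on S = {m_1,...,m_N} (given as ms : 'I_N -> R). *)
Definition pdg_data (R : comNzRingType) (N : nat) (ms : 'I_N -> R) : Prop :=
  [/\ (2 <= N)%N,
      (forall i, ms i != 0),
      (forall i, ~ unitR (ms i)) &
      (forall i j, i != j -> coprimeR (ms i) (ms j))].

Definition perfect_divisor (R : comNzRingType) (N : nat) (ms : 'I_N -> R)
    (d : R) : Prop :=
  d <> \prod_(i < N) ms i /\
  exists A : {set 'I_N}, A != set0 /\ d = \prod_(i in A) ms i.

Definition pdg_adj (R : comNzRingType) (a b : R) : Prop :=
  a <> b /\ (dvdR a b \/ dvdR b a).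

Definition PDG_ramsey (n k r : nat) : Prop :=
  forall (R : comNzRingType) (N : nat) (ms : 'I_N -> R),
    pdg_data ms -> ramsey_ok (perfect_divisor ms) (@pdg_adj R) n k r.

Definition partial_order (A : Type) (le : A -> A -> Prop) : Prop :=
  [/\ (forall x, le x x),
      (forall x y, le x y -> le y x -> x = y) &
      (forall x y z, le x y -> le y z -> le x z)].

Definition po_adj (A : Type) (le : A -> A -> Prop) (a b : A) : Prop :=
  a <> b /\ (le a b \/ le b a).

Definition PO_ramsey (n k r : nat) : Prop :=
  forall (A : Type) (le : A -> A -> Prop),
    partial_order le -> ramsey_ok (fun _ : A => True) (po_adj le) n k r.

From mathcomp Require Import all_boot all_algebra.
From mathcomp Require Import boolp.
From mathcomp Require Import ring zify.
Set Implicit Arguments. Unset Strict Implicit. Unset Printing Implicit Defensive.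
Import GRing.Theory Num.Theory.

(** Both graph classes are comparability graphs of finite posets: for pairwise
    coprime non-units, [\prod_(i in A) m_i] divides [\prod_(i in B) m_i] iff
    [A \subset B], so divisibility is a partial order on perfect divisors.
    Write [n = k + 1], [m = l + 1].  Upper bound (Mirsky): peeling off the
    minimal elements of a poset with more than [k * l] elements either leaves
    an antichain of size [l + 1] or can be repeated [k] times, producing a
    chain of size [k + 1].  Lower bound: the disjoint union of [l] chains of
    length [k], realised on [0, ..., k * l - 1] by the order "same block of
    length [k] and [<=]", and inside a perfect divisor graph by the products
    of [X - i] over the initial segments of these blocks. *)

Lemma nth_ord_inj (T : eqType) (x0 : T) (s : seq T) k :
  size s = k -> uniq s -> injective (fun i : 'I_k => nth x0 s i).
Proof.
by move=> sz s_uniq i j /eqP; rewrite nth_uniq ?sz // => /eqP /val_inj.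
Qed.

Section Mirsky.
Variables (X : finType) (lt : rel X).

Definition minimal (S : {set X}) := [set x in S | [forall y in S, ~~ lt y x]].

Definition is_chain (S : {set X}) (s : seq X) := {subset s <= S} /\ sorted lt s.

Definition is_antichain (S : {set X}) (s : seq X) :=
  [/\ uniq s, {subset s <= S} & {in s &, forall x y, ~~ lt x y}].

Lemma minimal_sub (S : {set X}) : minimal S \subset S.
Proof. by apply/subsetP => x; rewrite inE => /andP[]. Qed.

Lemma minimalPn (S : {set X}) x :
  x \in S -> x \notin minimal S -> exists2 y, y \in S & lt y x.
Proof.
move=> xS; rewrite inE xS negb_forall_in => /existsP[y /andP[yS /negPn]].
by exists y.
Qed.

Lemma minimal_antichain (S : {set X}) : is_antichain S (enum (minimal S)).
Proof.
split=> [|x|x y]; first exact: enum_uniq.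
  by rewrite mem_enum => /(subsetP (minimal_sub S)).
rewrite !mem_enum => /(subsetP (minimal_sub S)) xS.
by rewrite inE => /andP[_ /forall_inP /(_ x xS)].
Qed.

Lemma chain_or_antichain k l (S : {set X}) : k * l < #|S| ->
  (exists2 s, size s = k.+1 & is_chain S s) \/
  (exists2 s, size s = l.+1 & is_antichain S s).
Proof.
elim: k S => [|k IH] S ltS.
  have [x xS] : exists x, x \in S by apply/set0Pn; rewrite -card_gt0.
  by left; exists [:: x] => //; split=> // y; rewrite inE => /eqP ->.
have [ltM | leM] := ltnP l #|minimal S|.
  right; exists (take l.+1 (enum (minimal S))); first by rewrite size_takel -?cardE.
  have [M_uniq sub_M M_anti] := minimal_antichain S.
  split=> [|x /mem_take /sub_M //|x y /mem_take xM /mem_take yM]; last exact: M_anti.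
  exact: take_uniq.
have : k * l < #|S :\: minimal S| by rewrite cardsDS ?minimal_sub //; lia.
case/IH => [[[|c s] // sz [sub_SM srt]] | [s sz [s_uniq sub_SM s_anti]]]; last first.
  by right; exists s => //; split=> // x /sub_SM /setDP[].
have /setDP [cS cM] := sub_SM c (mem_head _ _).
have [y yS lt_yc] := minimalPn cS cM.
left; exists [:: y, c & s]; first by rewrite /= -sz.
split; last by rewrite /= lt_yc.
by move=> x; rewrite inE => /predU1P[-> // | /sub_SM /setDP[]].
Qed.

Hypotheses (lt_irr : irreflexive lt) (lt_trans : transitive lt).

Lemma comparable_or_incomparable k l : k * l < #|X| ->
  (exists g : 'I_k.+1 -> X, injective g /\
     forall i j, i != j -> lt (g i) (g j) || lt (g j) (g i)) \/
  (exists g : 'I_l.+1 -> X, injective g /\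
     forall i j, i != j -> ~~ (lt (g i) (g j) || lt (g j) (g i))).
Proof.
move=> ltX; have /card_gt0P [x0 _] : 0 < #|X| by apply: leq_ltn_trans ltX.
have := @chain_or_antichain k l setT; rewrite cardsT => /(_ ltX).
case=> [[s sz [_ s_sorted]] | [s sz [s_uniq _ s_anti]]].
- have g_inj := nth_ord_inj (x0 := x0) sz (sorted_uniq lt_trans lt_irr s_sorted).
  left; exists (fun i => nth x0 s i); split=> // i j ij.
  have lt_nth := sorted_ltn_nth lt_trans x0 s_sorted.
  case: (ltngtP i j) => [lt_ij|lt_ji|/val_inj eq_ij]; last by rewrite eq_ij eqxx in ij.
    by rewrite lt_nth ?inE ?sz ?ltn_ord.
  by rewrite (lt_nth j i) ?orbT ?inE ?sz ?ltn_ord.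
- have g_inj := nth_ord_inj (x0 := x0) sz s_uniq.
  right; exists (fun i => nth x0 s i); split=> // i j _.
  by rewrite negb_or !s_anti ?mem_nth ?sz.
Qed.

End Mirsky.

Lemma ramsey_ok_po_adj (T : Type) (V : T -> Prop) (le : T -> T -> Prop) k l :
  (forall x y, V x -> V y -> le x y -> le y x -> x = y) ->
  (forall x y z, V x -> V y -> V z -> le x y -> le y z -> le x z) ->
  ramsey_ok V (po_adj le) k.+1 l.+1 (k * l + 1).
Proof.
rewrite addn1 => le_anti le_trans f f_inj fV.
pose lt i j := (i != j) && `[< le (f i) (f j) >].
have lt_irr : irreflexive lt by move=> i; rewrite /lt eqxx.
have lt_trans : transitive lt.
  move=> j i h /andP[ij /asboolP le_ij] /andP[jh /asboolP le_jh].
  apply/andP; split; last exact/asboolP/(le_trans _ _ _ (fV i) (fV j) (fV h)).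
  apply: contraNneq ij => eq_ih; rewrite -{}eq_ih in le_jh.
  exact/eqP/f_inj/le_anti.
have adjE i j : i != j -> po_adj le (f i) (f j) <-> lt i j || lt j i.
  move=> ij; rewrite /lt ij eq_sym ij /=; split.
    by case=> _ [/asboolP -> | /asboolP ->]; rewrite ?orbT.
  move=> lt_ij; split=> [/f_inj /eqP|]; first by apply/negP.
  by case/orP: lt_ij => /asboolP; [left | right].
have := comparable_or_incomparable lt_irr lt_trans (k := k) (l := l).
rewrite card_ord ltnSn => /(_ isT) [[g [g_inj g_cmp]] | [g [g_inj g_incmp]]].
- left; exists g; split=> // i j ij; apply/adjE; last exact: g_cmp.
  by rewrite (inj_eq g_inj).
- right; exists g; split=> // i j ij; rewrite adjE ?(inj_eq g_inj) //.
  exact/negP/g_incmp.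
Qed.

Definition block_le k (a b : nat) := (a %/ k == b %/ k) && (a <= b).

Lemma block_le_refl k : reflexive (block_le k).
Proof. by move=> a; rewrite /block_le eqxx leqnn. Qed.

Lemma block_le_anti k : antisymmetric (block_le k).
Proof. by move=> a b /andP[/andP[_ ab] /andP[_ ba]]; apply/eqP; rewrite eqn_leq ab. Qed.

Lemma block_le_trans k : transitive (block_le k).
Proof.
move=> b a c /andP[/eqP ab le_ab] /andP[/eqP bc le_bc].
by rewrite /block_le ab bc eqxx (leq_trans le_ab).
Qed.

Lemma block_comparableE k a b :
  block_le k a b || block_le k b a = (a %/ k == b %/ k).
Proof. by rewrite /block_le eq_sym; case: eqP; rewrite ?leq_total. Qed.

Lemma card_same_block k n (g : 'I_n -> nat) : 0 < k -> injective g ->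
  (forall i j, g i %/ k = g j %/ k) -> n <= k.
Proof.
move=> k_gt0 g_inj same; pose h i := Ordinal (ltn_pmod (g i) k_gt0).
suff /leq_card : injective h by rewrite !card_ord.
move=> i j /(congr1 val) /= eq_mod; apply: g_inj.
by rewrite (divn_eq (g i) k) (divn_eq (g j) k) eq_mod (same i j).
Qed.

Lemma card_distinct_blocks k l n (g : 'I_n -> nat) : 0 < k ->
  (forall i, g i < k * l) -> (forall i j, i != j -> g i %/ k != g j %/ k) ->
  n <= l.
Proof.
move=> k_gt0 g_lt distinct.
have blk_lt i : g i %/ k < l by rewrite ltn_divLR // mulnC.
pose h i := Ordinal (blk_lt i).
suff /leq_card : injective h by rewrite !card_ord.
by move=> i j /(congr1 val) /= eq_blk; apply/eqP/negPn/negP => /distinct/eqP.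
Qed.

Lemma ramsey_ok_block_embedding (T : Type) (V : T -> Prop) (le : T -> T -> Prop)
    k l r (f : 'I_r -> T) :
  (forall x, le x x) -> (forall i, V (f i)) ->
  (forall i j, le (f i) (f j) <-> block_le k i j) ->
  ramsey_ok V (po_adj le) k.+1 l.+1 r -> k * l < r.
Proof.
move=> le_refl fV f_le ramsey.
have f_inj : injective f.
  move=> i j fij; apply/val_inj/block_le_anti.
  by apply/andP; split; apply/f_le; rewrite fij.
have adjE i j : po_adj le (f i) (f j) <-> (i != j) && (i %/ k == j %/ k).
  rewrite -block_comparableE; split.
    case=> fij cmp; apply/andP; split; first by apply: contra_not_neq fij => ->.
    by case: cmp => /f_le ->; rewrite ?orbT.
  case/andP => ij cmp; split; first by move=> /f_inj eq_ij; rewrite eq_ij eqxx in ij.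
  by case/orP: cmp => /f_le; [left | right].
rewrite ltnNge; apply/negP => r_le.
have k_gt0 (n : nat) (g : 'I_n.+1 -> 'I_r) : 0 < k.
  have r_gt0 : 0 < r := leq_ltn_trans (leq0n _) (ltn_ord (g ord0)).
  by move: (leq_trans r_gt0 r_le); rewrite muln_gt0 => /andP[].
case: (ramsey f f_inj fV) => [[g [g_inj g_clique]] | [g [g_inj g_indep]]].
- suff : k.+1 <= k by rewrite ltnn.
  apply: (card_same_block (k_gt0 _ g) (inj_comp val_inj g_inj)) => i j /=.
  by case: (eqVneq i j) => [-> | /g_clique /adjE /andP[_ /eqP]].
- suff : l.+1 <= l by rewrite ltnn.
  apply: (card_distinct_blocks (g := val \o g) (k_gt0 _ g)) => [i | i j ij].
    exact: leq_trans (ltn_ord _) r_le.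
  apply/negP => same; apply: (g_indep i j ij); apply/adjE.
  by rewrite same (inj_eq g_inj) ij.
Qed.

Lemma PO_ramsey_lower k l r : PO_ramsey k.+1 l.+1 r -> k * l < r.
Proof.
move=> /(_ nat (block_le k)) ramsey.
have le_po : partial_order (block_le k).
  split=> [|a b ab ba|a b c]; [exact: block_le_refl | | exact: block_le_trans].
  by apply: (block_le_anti (k := k)); apply/andP.
apply: (ramsey_ok_block_embedding (f := val) _ _ _ (ramsey le_po)) => //.
exact: block_le_refl.
Qed.

Local Open Scope ring_scope.

Section Divisibility.
Variable R : comNzRingType.

Lemma dvdR_refl (a : R) : dvdR a a.
Proof. by exists 1; rewrite mulr1. Qed.

Lemma dvdR_trans (a b c : R) : dvdR a b -> dvdR b c -> dvdR a c.
Proof. by move=> [x ->] [y ->]; exists (x * y); rewrite mulrA. Qed.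

Lemma coprimeRMr (a b c : R) : coprimeR a b -> coprimeR a c -> coprimeR a (b * c).
Proof.
move=> [r [s rs1]] [r' [s' rs1']].
exists (r * r' * a + r * s' * c + s * b * r'), (s * s').
have -> : 1 = (r * a + s * b) * (r' * a + s' * c) by rewrite rs1 rs1' mulr1.
ring.
Qed.

Lemma coprimeR_prodr (I : finType) (B : {set I}) (F : I -> R) (a : R) :
  (forall i, i \in B -> coprimeR a (F i)) -> coprimeR a (\prod_(i in B) F i).
Proof.
move=> cop; apply: (big_ind (coprimeR a)) => //; last exact: coprimeRMr.
by exists 0, 1; rewrite mul0r add0r mulr1.
Qed.

Variables (I : finType) (ms : I -> R).
Hypothesis ms_nonunit : forall i, ~ unitR (ms i).
Hypothesis ms_coprime : forall i j, i != j -> coprimeR (ms i) (ms j).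

Lemma dvdR_prodP (A B : {set I}) :
  dvdR (\prod_(i in A) ms i) (\prod_(i in B) ms i) <-> A \subset B.
Proof.
split=> [[c prodB] | /setIidPr <-]; last first.
  by exists (\prod_(i in B :\: A) ms i); rewrite (big_setID A).
apply/subsetP => i iA; apply/negPn/negP => iNB; apply: (@ms_nonunit i).
have [r [s rs1]] : coprimeR (ms i) (\prod_(j in B) ms j).
  by apply: coprimeR_prodr => j jB; apply: ms_coprime; apply: contraNneq iNB => ->.
rewrite prodB (big_setD1 i iA) /= in rs1.
by exists (r + s * (\prod_(j in A :\ i) ms j) * c); rewrite -[RHS]rs1; ring.
Qed.

End Divisibility.

Lemma perfect_divisor_dvdR_anti (R : comNzRingType) N (ms : 'I_N -> R) :
  (forall i, ~ unitR (ms i)) -> (forall i j, i != j -> coprimeR (ms i) (ms j)) ->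
  forall x y, perfect_divisor ms x -> perfect_divisor ms y ->
  dvdR x y -> dvdR y x -> x = y.
Proof.
move=> nonunit cop x y [_ [A [_ ->]]] [_ [B [_ ->]]].
move=> /(dvdR_prodP nonunit cop) AB /(dvdR_prodP nonunit cop) BA.
by have -> : A = B by apply/eqP; rewrite eqEsubset AB.
Qed.

Lemma XsubC_nonunit (F : idomainType) (a : F) : ~ unitR ('X - a%:P).
Proof. by move=> /unitrPr; rewrite poly_unitE size_XsubC. Qed.

Lemma coprimeR_XsubC (F : fieldType) (a b : F) : a != b ->
  coprimeR ('X - a%:P) ('X - b%:P).
Proof.
move=> ab; exists (b - a)^-1%:P, (- (b - a)^-1%:P).
rewrite mulNr -mulrBr (_ : _ - _ = (b - a)%:P); last by rewrite polyCB; ring.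
by rewrite -polyCM mulVf // subr_eq0 eq_sym.
Qed.

Lemma pdg_data_XsubC (F : fieldType) N (a : 'I_N -> F) : (1 < N)%N -> injective a ->
  pdg_data (fun i => 'X - (a i)%:P).
Proof.
move=> N_gt1 a_inj; split=> // [i|i|i j ij]; first by rewrite polyXsubC_eq0.
  exact: XsubC_nonunit.
by apply: coprimeR_XsubC; rewrite (inj_eq a_inj).
Qed.

Lemma PDG_ramsey_lower k l r : PDG_ramsey k.+1 l.+1 r -> (k * l < r)%N.
Proof.
(* Two spare factors: [N >= 2], and the last one never divides any [d t]. *)
pose ms (i : 'I_r.+2) : {poly rat} := 'X - (i%:R)%:P.
have ms_data : pdg_data ms.
  by apply: pdg_data_XsubC => // i j /eqP; rewrite eqr_nat => /eqP /val_inj.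
have [_ _ ms_nonunit ms_coprime] := ms_data.
pose A (t : 'I_r) := [set i : 'I_r.+2 | block_le k i t].
pose d t := \prod_(i in A t) ms i.
have tA t : widen_ord (leqW (leqnSn r)) t \in A t by rewrite inE block_le_refl.
have d_le a b : dvdR (d a) (d b) <-> block_le k a b.
  rewrite dvdR_prodP //; split=> [/subsetP /(_ _ (tA a)) | ab]; first by rewrite inE.
  by apply/subsetP => i; rewrite !inE => /block_le_trans; apply.
have dV t : perfect_divisor ms (d t).
  split; last by exists (A t); split=> //; apply/set0Pn; eexists; apply: tA.
  move=> dt_full; have : dvdR (\prod_(i in [set: 'I_r.+2]) ms i) (d t).
    by rewrite dt_full; under eq_bigl do rewrite inE; apply: dvdR_refl.
  rewrite dvdR_prodP // => /subsetP /(_ ord_max); rewrite !inE => /(_ isT) /andP[_].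
  by have := ltn_ord t; rewrite /=; lia.
move=> /(_ _ _ ms ms_data).
by apply: ramsey_ok_block_embedding => //; apply: dvdR_refl.
Qed.

Theorem theorem3p4 (n m : nat) : (1 <= n)%N -> (1 <= m)%N ->
  is_min_nat (PDG_ramsey n m) ((n - 1) * (m - 1) + 1)%N /\
  is_min_nat (PO_ramsey n m) ((n - 1) * (m - 1) + 1)%N.
Proof.
case: n => // k _; case: m => // l _; rewrite !subn1 /=.
split; split=> [|r].
- move=> R N ms [_ _ ms_nonunit ms_coprime].
  apply: (ramsey_ok_po_adj (le := @dvdR R)) => [|x y z _ _ _]; last exact: dvdR_trans.
  exact: perfect_divisor_dvdR_anti ms_nonunit ms_coprime.
- by rewrite addn1; apply: PDG_ramsey_lower.
- move=> A le [_ le_anti le_trans].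
  apply: ramsey_ok_po_adj => [x y _ _ | x y z _ _ _]; first exact: le_anti.
  exact: le_trans.
- by rewrite addn1; apply: PO_ramsey_lower.
Qed.
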